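(* There exists a constant $0<c'<1$ such that for all integers $m\ge1$, $n>2m$ and all $\sigma_1^2,\dots,\sigma_n^2>0$, $\mathrm{Ent}(\sigma^2_L)\ge c'\,\mathrm{Ent}(\sigma^2_{G^{r}})-c'\ln(2)$, where $L\subset G^{r}$ with $|L|=2m$ consists of $2m$ arms of $G^{r}$ with the largest variances.
   Context: For a positive vector $a$, $\mathrm{Ent}(a)=-\sum_i\hat a_i\ln\hat a_i$ with $\hat a_i=a_i/\sum_ja_j$; $\sigma^2_S=(\sigma_i^2)_{i\in S}$. Let $\underline\sigma^2=\min_i\sigma_i^2$, $G_j=\{i\in[n]:2^{j-1}\le\sigma_i^2/\underline\sigma^2<2^j\}$ for $j=1,\dots,k$ covering $[n]$. $G'_j=G_j$ if $|G_j|\le2m$, otherwise $G'_j\subset G_j$ with $|G'_j|=2m$; $G^{r}=\bigcup_jG'_j$, the choices made to maximize $\mathrm{Ent}(\sigma^2_{G^{r}})$. *)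

From HB Require Import structures.
From mathcomp Require Import all_boot all_order all_algebra.
From mathcomp Require Import reals exp.
Set Implicit Arguments. Unset Strict Implicit. Unset Printing Implicit Defensive.
Import Order.TTheory GRing.Theory Num.Theory.
Local Open Scope ring_scope.

Section Defs.
Variables (R : realType) (n : nat).

Definition Ent (s : 'I_n -> R) (S : {set 'I_n}) : R :=
  let t := \sum_(i in S) s i in
  - \sum_(i in S) (s i / t) * ln (s i / t).

(* minimum variance (the seed is any element of 'I_n; correct whenever n > 0) *)
Definition varmin (s : 'I_n -> R) : R :=
  \big[Num.min/oapp s 0 [pick i : 'I_n]]_(i < n) s i.

Definition grp (s : 'I_n -> R) (j : nat) : {set 'I_n} :=
  [set i | (2 ^+ j.-1 <= s i / varmin s) && (s i / varmin s < 2 ^+ j)].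

(* Gr is an admissible G^r: Gr = U_j G'_j with G'_j = G_j if |G_j| <= 2m,
   otherwise G'_j a subset of G_j of size 2m (the groups with j >= 1 cover [n]). *)
Definition admissible (m : nat) (s : 'I_n -> R) (Gr : {set 'I_n}) : Prop :=
  forall j : nat, (0 < j)%N ->
    if (#|grp s j| <= 2 * m)%N then Gr :&: grp s j = grp s j
    else #|Gr :&: grp s j| = (2 * m)%N.

Definition Gr_choice (m : nat) (s : 'I_n -> R) (Gr : {set 'I_n}) : Prop :=
  admissible m s Gr /\
  forall Gr' : {set 'I_n}, admissible m s Gr' -> Ent s Gr' <= Ent s Gr.

Definition top_arms (m : nat) (s : 'I_n -> R) (Gr L : {set 'I_n}) : Prop :=
  [/\ L \subset Gr, #|L| = (2 * m)%N &
      forall i j, i \in L -> j \in Gr :\: L -> s j <= s i].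

End Defs.

(* Let a be the least variance in L. Every arm of G^r \ L has variance at most
   a, hence lies in a group G_j with j <= J, where a lies in G_J; G^r keeps at
   most 2m arms of each group, all of variance below 2^(j-J+1) a. Summing these
   geometric bounds, both the mass of G^r \ L and its contribution
   sum_i sigma_i^2 ln (a / sigma_i^2) to the unnormalised entropy are O(m a).
   By concavity of x ln (S / x), the unnormalised entropy of L, whose mass is
   S >= 2 m a, is at least m a ln (S / a) >= m a / 2. So the unnormalised
   entropy of G^r is at most 121 times that of L, and as G^r has the larger
   mass, Ent(G^r) <= 121 Ent(L). *)

From HB Require Import structures.
From mathcomp Require Import all_boot all_order all_algebra.
From mathcomp Require Import reals exp.
From mathcomp Require Import ring lra zify.
Import Order.TTheory GRing.Theory Num.Theory.
Set Implicit Arguments. Unset Strict Implicit. Unset Printing Implicit Defensive.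
Local Open Scope ring_scope.

Section LnInequalities.
Variable R : realType.

Lemma ln_le_subr1 (z : R) : 0 < z -> ln z <= z - 1.
Proof. by move=> z0; have := @le_ln1Dx R (z - 1); rewrite subrKC; apply; lra. Qed.

Lemma ln_le_pow2 (x : R) (k : nat) : 0 < x -> x <= 2 ^+ k -> ln x <= k%:R.
Proof.
move=> x0 xk; have ln2_le1 : ln (2 : R) <= 1 by have := @ln_le_subr1 2; lra.
apply: (le_trans (y := ln (2 ^+ k))); first by rewrite ler_ln ?posrE ?exprn_gt0.
rewrite lnXn // -[_ *+ k]mulr_natr; have := ler0n R k; nra.
Qed.

Lemma subr_le_mul_ln (p q : R) : 0 < p -> 0 < q -> q - p <= q * ln (q / p).
Proof.
move=> p0 q0; have := @ln_le_subr1 (p / q) (divr_gt0 p0 q0).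
rewrite -[p / q]invf_div lnV ?posrE ?divr_gt0 // invf_div => h.
have := ler_wpM2l (ltW q0) h.
have -> : q * (p / q - 1) = p - q by field; rewrite gt_eqF.
lra.
Qed.

(* The chord inequality for the concave function x |-> x ln (S / x) on [a, S]. *)
Lemma mul_ln_chord (a x S : R) : 0 < a -> a <= x -> x <= S ->
  a * ln (S / a) * (S - x) <= x * ln (S / x) * (S - a).
Proof.
move=> a0 ax xS; have x0 : 0 < x by apply: lt_le_trans ax.
have S0 : 0 < S by apply: lt_le_trans xS.
have lnSa : ln (S / a) = ln (S / x) - ln (a / x).
  by rewrite -ln_div ?posrE ?divr_gt0 //; congr ln; field; rewrite !gt_eqF.
rewrite lnSa; have hax := subr_le_mul_ln x0 a0; have hSx := subr_le_mul_ln x0 S0.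
set u := ln (S / x) in hSx *; set w := ln (a / x) in hax *.
have k1 : (S - x) * (a - x) <= (S - x) * (a * w) by rewrite ler_wpM2l ?subr_ge0.
have k2 : (x - a) * (S - x) <= (x - a) * (S * u) by rewrite ler_wpM2l ?subr_ge0.
nra.
Qed.

End LnInequalities.

Lemma sum_pow2 k : ((\sum_(j < k) 2 ^ j).+1 = 2 ^ k)%N.
Proof.
elim: k => [|k IH]; first by rewrite big_ord0.
by rewrite big_ord_recr /= -addSn IH expnS mul2n addnn.
Qed.

Lemma sum_pow2_mul_sub k : (\sum_(j < k) 2 ^ j * (k - j) + k + 2 = 2 ^ k.+1)%N.
Proof.
elim: k => [|k IH]; first by rewrite big_ord0.
rewrite big_ord_recr /= subSnn muln1.
rewrite (eq_bigr (fun j : 'I_k => 2 ^ j * (k - j) + 2 ^ j)%N); last first.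
  by move=> j _; rewrite subSn ?mulnSr // ltnW.
rewrite big_split /= !expnS -sum_pow2 in IH *.
move: IH; move: (\sum_(j < k) _ * _)%N (\sum_(j < k) 2 ^ j)%N => A B; lia.
Qed.

Lemma sum_pow2_le (R : numDomainType) k : \sum_(j < k) (2 : R) ^+ j <= 2 ^+ k.
Proof.
under eq_bigr do rewrite -natrX.
by rewrite -natr_sum -natrX ler_nat -sum_pow2.
Qed.

Lemma sum_pow2_mul_sub_le (R : numDomainType) k :
  \sum_(j < k) (2 : R) ^+ j * (k - j)%:R <= 2 ^+ k.+1.
Proof.
under eq_bigr do rewrite -natrX -natrM.
by rewrite -natr_sum -natrX ler_nat -sum_pow2_mul_sub -addnA leq_addr.
Qed.

Lemma exists_pow2_bracket (R : realType) (x : R) : 1 <= x ->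
  exists2 j, (0 < j)%N & 2 ^+ j.-1 <= x < 2 ^+ j.
Proof.
move=> x1; have x0 : 0 <= x by apply: le_trans x1.
have exP : exists j : nat, x < 2 ^+ j.
  exists (Num.Def.archi_bound x); apply: lt_trans (archi_boundP x0) _.
  by rewrite -natrX ltr_nat ltn_expl.
case: (ex_minnP exP) => j xj jmin.
have j0 : (0 < j)%N.
  by case: j xj {jmin} => // xj; have := lt_le_trans xj x1; rewrite ltxx.
exists j => //; rewrite xj andbT leNgt; apply/negP => /jmin.
by rewrite -{1}(prednK j0) ltnn.
Qed.

Section WeightedLogSums.
Variables (R : realType) (I : finType) (s : I -> R).

Lemma ler_term_sum (X : {set I}) i : {in X, forall j, 0 <= s j} -> i \in X ->
  s i <= \sum_(j in X) s j.
Proof.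
by move=> s_ge0 iX; rewrite (bigD1 i) //= lerDl sumr_ge0 // => j /andP[/s_ge0].
Qed.

Lemma wln_ge0 (X : {set I}) : {in X, forall i, 0 < s i} ->
  0 <= \sum_(i in X) s i * ln ((\sum_(j in X) s j) / s i).
Proof.
move=> s_gt0; apply: sumr_ge0 => i iX; apply: mulr_ge0; first exact/ltW/s_gt0.
apply: ln_ge0; rewrite ler_pdivlMr ?s_gt0 // mul1r.
by apply: (ler_term_sum _ iX) => j /s_gt0 /ltW.
Qed.

Lemma sum_mul_ln_shift (X : {set I}) (c d : R) : 0 < c -> 0 < d ->
  {in X, forall i, 0 < s i} ->
  \sum_(i in X) s i * ln (c / s i) =
    (\sum_(i in X) s i) * ln (c / d) + \sum_(i in X) s i * ln (d / s i).
Proof.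
move=> c0 d0 s_gt0; rewrite mulr_suml -big_split; apply: eq_bigr => i iX /=.
rewrite -mulrDr -lnM ?posrE ?divr_gt0 ?s_gt0 //; congr (_ * ln _).
by field; rewrite !gt_eqF ?s_gt0.
Qed.

Lemma sum_mul_ln_ge_chord (X : {set I}) (a : R) :
  (1 < #|X|)%N -> 0 < a -> {in X, forall i, a <= s i} ->
  (#|X|%:R - 1) * a * ln ((\sum_(i in X) s i) / a) <=
    \sum_(i in X) s i * ln ((\sum_(j in X) s j) / s i).
Proof.
move=> X2 a0 a_le; set S := \sum_(i in X) s i.
have s_gt0 : {in X, forall i, 0 < s i} by move=> i /a_le; apply: lt_le_trans.
have s_le_S : {in X, forall i, s i <= S}.
  by move=> i; apply: ler_term_sum => j /s_gt0 /ltW.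
have aS : #|X|%:R * a <= S.
  by rewrite /S -sum1_card natr_sum mulr_suml ler_sum // => i /a_le; rewrite mul1r.
have S0 : 0 < S by apply: lt_le_trans aS; rewrite mulr_gt0 // ltr0n ltnW.
have W0 := wln_ge0 s_gt0.
have chord : a * ln (S / a) * (S *+ #|X| - S) <=
    (\sum_(i in X) s i * ln (S / s i)) * (S - a).
  rewrite -sumr_const -/S -sumrB mulr_sumr mulr_suml.
  by apply: ler_sum => i iX; apply: mul_ln_chord; rewrite ?a_le ?s_le_S.
rewrite -mulr_natl in chord; rewrite -(ler_pM2r S0).
set l := ln (S / a) in chord *; set W := \sum_(i in X) _ in chord W0 *.
have : W * (S - a) <= W * S by rewrite ler_wpM2l // lerBlDr lerDl ltW.
nra.
Qed.

End WeightedLogSums.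

Lemma Ent_ratio (R : realType) n (s : 'I_n -> R) (X : {set 'I_n}) :
  {in X, forall i, 0 < s i} ->
  Ent s X = (\sum_(i in X) s i)^-1 *
            \sum_(i in X) s i * ln ((\sum_(j in X) s j) / s i).
Proof.
move=> s_gt0; rewrite /Ent mulr_sumr -sumrN; apply: eq_bigr => i iX.
set t := \sum_(j in X) s j.
have t0 : 0 < t.
  apply: lt_le_trans (s_gt0 i iX) _; apply: (ler_term_sum _ iX).
  by move=> j /s_gt0 /ltW.
have -> : ln (s i / t) = - ln (t / s i).
  by rewrite -lnV ?posrE ?divr_gt0 ?s_gt0 // invf_div.
by rewrite mulrN opprK mulrCA mulrA.
Qed.

Section VarianceGroups.
Variables (R : realType) (n : nat) (s : 'I_n -> R).
Hypothesis s_gt0 : forall i, 0 < s i.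

Lemma varmin_le i : varmin s <= s i.
Proof. exact: bigmin_le. Qed.

Lemma varmin_gt0 (i0 : 'I_n) : 0 < varmin s.
Proof.
apply: (big_ind (fun x => 0 < x)) => [|x y x0 y0|i _]; last exact: s_gt0.
  by case: pickP => [i _ /=|/(_ i0) //]; apply: s_gt0.
by rewrite lt_min x0 y0.
Qed.

Lemma grp0 : grp s 0 = set0.
Proof.
apply/setP => i; rewrite !inE expr0.
by case: leP => // h; rewrite ltNge h.
Qed.

Lemma grpP j i : i \in grp s j ->
  [/\ (0 < j)%N, 2 ^+ j.-1 * varmin s <= s i & s i < 2 ^+ j * varmin s].
Proof.
case: j => [|j]; first by rewrite grp0 inE.
have v0 := varmin_gt0 i.
by rewrite inE => /andP[h1 h2]; rewrite -ler_pdivlMr // -ltr_pdivrMr.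
Qed.

Lemma grp_cover i : exists j, i \in grp s j.
Proof.
have v0 := varmin_gt0 i.
have [|j _ ij] := @exists_pow2_bracket R (s i / varmin s).
  by rewrite ler_pdivlMr // mul1r varmin_le.
by exists j; rewrite inE.
Qed.

Lemma grp_mono j k i i' : i \in grp s j -> i' \in grp s k -> s i <= s i' ->
  (j <= k)%N.
Proof.
move=> /grpP[j0 ij _] /grpP[_ _ i'k] le_ii'.
have v0 := varmin_gt0 i.
have : 2 ^+ j.-1 * varmin s < 2 ^+ k * varmin s.
  by apply: le_lt_trans ij _; apply: le_lt_trans i'k.
by rewrite ltr_pM2r // ltr_eXn2l ?ltr1n // -{2}(prednK j0).
Qed.

Variables (m : nat) (Gr : {set 'I_n}).
Hypothesis Gr_adm : admissible m s Gr.

Lemma card_grp_le (X : {set 'I_n}) j : X \subset Gr ->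
  (#|X :&: grp s j| <= 2 * m)%N.
Proof.
move=> XGr; case: j => [|j]; first by rewrite grp0 setI0 cards0.
have := Gr_adm (isT : 0 < j.+1)%N; case: ifP => [Gj_small _|_ <-].
  by apply: leq_trans Gj_small; apply/subset_leq_card/subsetIr.
exact/subset_leq_card/setSI.
Qed.

Variables (X : {set 'I_n}) (k : 'I_n) (J : nat).
Hypotheses (X_Gr : X \subset Gr) (X_le_k : {in X, forall i, s i <= s k})
  (k_J : k \in grp s J).

Lemma sum_le_grp_bound (F : 'I_n -> R) (B : nat -> R) :
  {in X, forall i, 0 <= F i} ->
  (forall j i, (j <= J)%N -> i \in X -> i \in grp s j -> F i <= B j) ->
  (forall j, 0 <= B j) ->
  \sum_(i in X) F i <= (2 * m)%:R * \sum_(j < J.+1) B j.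
Proof.
move=> F_ge0 F_le_B B_ge0.
apply: (le_trans (y := \sum_(i in X) \sum_(j < J.+1)
                         (if i \in grp s j then F i else 0))).
  apply: ler_sum => i iX; have [j ij] := grp_cover i.
  have jJ : (j < J.+1)%N by apply: grp_mono ij k_J (X_le_k iX).
  rewrite (bigD1 (Ordinal jJ)) //= ij lerDl sumr_ge0 // => j' _.
  by case: ifP => // _; apply: F_ge0.
rewrite exchange_big mulr_sumr; apply: ler_sum => j _ /=.
rewrite -big_mkcondr /=.
apply: (le_trans (y := \sum_(i in X :&: grp s j) B j)).
  rewrite [leRHS](eq_bigl (fun i => (i \in X) && (i \in grp s j))) => [|i]; last first.
    by rewrite inE.
  by apply: ler_sum => i /andP[iX ij]; apply: F_le_B => //; rewrite -ltnS.
rewrite sumr_const -[_ *+ _]mulr_natl; apply: ler_wpM2r => //.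
by rewrite ler_nat card_grp_le.
Qed.

Lemma pow2_varmin_le : 2 ^+ J * varmin s <= 2 * s k.
Proof.
have [J0 kJ _] := grpP k_J.
by rewrite -(prednK J0) exprS -mulrA ler_pM2l.
Qed.

Lemma sum_below_le : \sum_(i in X) s i <= 8 * (m%:R * s k).
Proof.
have v0 := varmin_gt0 k.
apply: (le_trans (sum_le_grp_bound (B := fun j => 2 ^+ j * varmin s) _ _ _)).
- by move=> i _; apply: ltW.
- by move=> j i _ _ /grpP[_ _ /ltW].
- by move=> j; rewrite mulr_ge0 ?exprn_ge0 // ltW.
have := sum_pow2_le R J.+1; have := pow2_varmin_le.
rewrite -mulr_suml natrM exprS => hJ hS2; have := ler0n R m.
have : (\sum_(j < J.+1) 2 ^+ j) * varmin s <= 4 * s k by nra.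
nra.
Qed.

Lemma sum_mul_ln_below_le :
  \sum_(i in X) s i * ln (s k / s i) <= 16 * (m%:R * s k).
Proof.
have v0 := varmin_gt0 k.
have ln_ge0_k i : i \in X -> 0 <= ln (s k / s i).
  by move=> iX; apply: ln_ge0; rewrite ler_pdivlMr // mul1r X_le_k.
apply: (le_trans (sum_le_grp_bound
  (B := fun j => 2 ^+ j * varmin s * (J.+1 - j)%:R) _ _ _)).
- by move=> i iX; apply: mulr_ge0; [apply: ltW | apply: ln_ge0_k].
- move=> j i jJ iX /grpP[j0 ij ji]; have [_ _ kJ] := grpP k_J.
  apply: ler_pM; [exact: ltW | exact: ln_ge0_k | exact: ltW |].
  apply: ln_le_pow2; first exact: divr_gt0.
  rewrite ler_pdivrMr //; apply: le_trans (ltW kJ) _.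
  have eJ : J = ((J.+1 - j) + j.-1)%N by lia.
  by rewrite {1}eJ exprD -mulrA ler_pM2l ?exprn_gt0.
- by move=> j; rewrite !mulr_ge0 ?exprn_ge0 ?ler0n ?ltW.
under eq_bigr do rewrite mulrAC.
have := sum_pow2_mul_sub_le R J.+1; have := pow2_varmin_le.
rewrite -mulr_suml natrM !exprS => hJ hS2; have := ler0n R m.
have : (\sum_(j < J.+1) 2 ^+ j * (J.+1 - j)%:R) * varmin s <= 8 * s k by nra.
nra.
Qed.

End VarianceGroups.

Section TopArms.
Variables (R : realType) (m n : nat) (s : 'I_n -> R) (Gr L : {set 'I_n}).
Variable ia : 'I_n.
Hypotheses (m_gt0 : (0 < m)%N) (s_gt0 : forall i, 0 < s i).
Hypotheses (Gr_adm : admissible m s Gr) (L_top : top_arms m s Gr L).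
Hypotheses (ia_L : ia \in L) (ia_min : {in L, forall i, s ia <= s i}).

Local Notation tot X := (\sum_(i in X) s i).
Local Notation wln X c := (\sum_(i in X) s i * ln (c / s i)).

Lemma tot_gt0 (X : {set 'I_n}) : ia \in X -> 0 < tot X.
Proof.
move=> iaX; apply: lt_le_trans (s_gt0 ia) _.
by apply: (ler_term_sum _ iaX) => i _; apply: ltW.
Qed.

Lemma tot_Gr : tot Gr = tot L + tot (Gr :\: L).
Proof. by case: L_top => LGr _ _; rewrite (big_setID L) /= (setIidPr LGr). Qed.

Lemma tot_top_ge : 2 * (m%:R * s ia) <= tot L.
Proof.
case: L_top => _ cardL _; apply: (le_trans (y := \sum_(i in L) s ia)).
  by rewrite sumr_const cardL -[s ia *+ _]mulr_natl natrM mulrA.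
exact: ler_sum.
Qed.

Lemma rest_le_min : {in Gr :\: L, forall i, s i <= s ia}.
Proof. by case: L_top => _ _ topL i iR; apply: topL. Qed.

Lemma tot_rest_le : tot (Gr :\: L) <= 8 * (m%:R * s ia).
Proof.
have [J ia_J] := grp_cover s_gt0 ia.
exact: (sum_below_le s_gt0 Gr_adm (subsetDl Gr L) rest_le_min ia_J).
Qed.

Lemma wln_rest_le : wln (Gr :\: L) (s ia) <= 16 * (m%:R * s ia).
Proof.
have [J ia_J] := grp_cover s_gt0 ia.
exact: (sum_mul_ln_below_le s_gt0 Gr_adm (subsetDl Gr L) rest_le_min ia_J).
Qed.

Lemma ln_top_ge_half : 1 / 2 <= ln (tot L / s ia).
Proof.
have S0 := tot_gt0 ia_L; have a0 := s_gt0 ia.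
have := subr_le_mul_ln a0 S0; have := tot_top_ge.
have : s ia <= m%:R * s ia by rewrite -[leLHS]mul1r ler_wpM2r ?ler1n // ltW.
by rewrite -(ler_pM2l S0); lra.
Qed.

Lemma wln_top_ge : m%:R * s ia * ln (tot L / s ia) <= wln L (tot L).
Proof.
case: L_top => _ cardL _; have L2 : (1 < #|L|)%N by rewrite cardL; lia.
have := sum_mul_ln_ge_chord L2 (s_gt0 ia) ia_min; rewrite cardL natrM.
apply: le_trans; have M1 : 1 <= m%:R :> R by rewrite ler1n.
have : 0 <= s ia * ln (tot L / s ia).
  by apply: mulr_ge0; [exact: ltW | have := ln_top_ge_half; lra].
nra.
Qed.

Lemma wln_Gr_split :
  wln Gr (tot Gr) = tot L * ln (tot Gr / tot L) + wln L (tot L) +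
    (tot (Gr :\: L) * (ln (tot Gr / tot L) + ln (tot L / s ia)) +
     wln (Gr :\: L) (s ia)).
Proof.
case: L_top => LGr _ _; have ia_Gr : ia \in Gr by apply: (subsetP LGr).
have S0 := tot_gt0 ia_L; have T0 := tot_gt0 ia_Gr.
rewrite [LHS](big_setID L) /= (setIidPr LGr).
rewrite (sum_mul_ln_shift (X := L) T0 S0) ?(in1W s_gt0) //.
rewrite (sum_mul_ln_shift (X := Gr :\: L) T0 (s_gt0 ia)) ?(in1W s_gt0) //.
by rewrite -lnM ?posrE ?divr_gt0 // mulrA divfK ?gt_eqF.
Qed.

Lemma wln_Gr_le : wln Gr (tot Gr) <= 121 * wln L (tot L).
Proof.
have S0 := tot_gt0 ia_L.
have Q0 : 0 <= tot (Gr :\: L) by apply: sumr_ge0 => i _; apply: ltW.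
have hQ := tot_rest_le; have hR := wln_rest_le; have hS := tot_top_ge.
have hl := ln_top_ge_half; have hWL := wln_top_ge.
rewrite wln_Gr_split tot_Gr.
set S := tot L in S0 hQ hS hl hWL *; set Q := tot (Gr :\: L) in Q0 hQ *.
set X := m%:R * s ia in hQ hR hS hWL *.
set p := ln ((S + Q) / S); set l := ln (S / s ia) in hl hWL *.
have hp : S * p <= Q.
  have := ler_wpM2l (ltW S0) (ln_le_subr1 (divr_gt0 (ltr_wpDr Q0 S0) S0)).
  by congr (_ <= _); field; rewrite gt_eqF.
have p0 : 0 <= p by apply: ln_ge0; rewrite ler_pdivlMr // mul1r lerDl.
have p4 : p <= 4 by rewrite -(ler_pM2l S0); lra.
have X0 : 0 <= X by lra.
have : Q * p <= 8 * X * 4 by nra.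
have : Q * l <= 8 * (X * l) by nra.
have : X <= 2 * (X * l) by nra.
lra.
Qed.

Lemma Ent_Gr_le : Ent s Gr <= 121 * Ent s L.
Proof.
have S0 := tot_gt0 ia_L; have WL0 := wln_ge0 (in1W s_gt0 : {in L, _}).
have T0 : 0 < tot Gr by rewrite tot_Gr ltr_wpDr ?sumr_ge0 // => i _; apply: ltW.
rewrite !Ent_ratio ?(in1W s_gt0) // mulrCA.
apply: le_trans (ler_wpM2l _ wln_Gr_le) _; first by rewrite invr_ge0 ltW.
rewrite ler_wpM2r ?mulr_ge0 // lef_pV2 ?posrE // tot_Gr lerDl.
by rewrite sumr_ge0 // => i _; apply: ltW.
Qed.

End TopArms.

Theorem lemma10 (R : realType) :
  exists c' : R, 0 < c' < 1 /\
  forall (m n : nat) (s : 'I_n -> R),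
    (1 <= m)%N -> (2 * m < n)%N -> (forall i, 0 < s i) ->
    forall Gr L : {set 'I_n},
      Gr_choice m s Gr -> top_arms m s Gr L ->
      Ent s L >= c' * Ent s Gr - c' * ln 2.
Proof.
exists 121^-1; split; first by rewrite invr_gt0 ltr0n invf_lt1 ?ltr0n // ltr1n.
move=> m n s m_gt0 _ s_gt0 Gr L [Gr_adm _] L_top.
have [ia ia_L ia_min] : exists2 ia, ia \in L & {in L, forall i, s ia <= s i}.
  case: L_top => _ cardL _.
  have /set0Pn[i0 i0L] : L != set0 by rewrite -card_gt0 cardL muln_gt0.
  by case: (arg_minP s i0L) => ia; exists ia.
have := Ent_Gr_le m_gt0 s_gt0 Gr_adm L_top ia_L ia_min.
have : 0 <= ln (2 : R) by apply: ln_ge0; rewrite ler1n.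
lra.
Qed.
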